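(* Let $(G,u,v,\alpha,\beta)$ be a Guvab satisfying all of the following: (i) $\beta=1$; (ii) $2d(u,v)=\max_{w\in V(G)}d(w,v)$; (iii) if $d(x,v)=\max_{w\in V(G)}d(w,v)$, then $d(n,v)<d(x,v)$ for every neighbor $n$ of $x$; (iv) if $0<d(x,v)<\max_{w\in V(G)}d(w,v)$, then for exactly half of the neighbors $n$ of $x$ we have $d(n,v)<d(x,v)$ and for exactly the other half we have $d(n,v)>d(x,v)$. Then $W_0=W_1=W_2=\cdots$.
   Context: A Guvab is a tuple $(G,u,v,\alpha,\beta)$ where $G$ is a finite, connected, simple graph, $u,v\in V(G)$, and $\alpha,\beta\in[0,1]$ with $\alpha\le\beta$. A random walk on $G$ with starting vertex $w$ and laziness $\gamma$ is the Markov chain $R_0=w$ and, for $i\ge1$, $R_i=R_{i-1}$ with probability $\gamma$ and $R_i=t$ with probability $\frac{1-\gamma}{\deg(R_{i-1})}$ for each neighbor $t$ of $R_{i-1}$. $\mu_k$ is the distribution after $k$ steps of the walk from $u$ with laziness $\alpha$, $\nu_k$ that of the walk from $v$ with laziness $\beta$, and $W_k=W(\mu_k,\nu_k)$ is the Wasserstein ($L^1$ optimal transport) distance with respect to the graph distance $d$. *)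

From mathcomp Require Import all_boot all_order all_algebra.
From mathcomp Require Import classical_sets reals.
Set Implicit Arguments. Unset Strict Implicit. Unset Printing Implicit Defensive.
Import Order.TTheory GRing.Theory Num.Theory.
Local Open Scope ring_scope.

Section Graph.
Variable T : finType.
Variable e : rel T.

Definition simple_graph := symmetric e /\ irreflexive e.
Definition connected_graph := forall x y : T, connect e x y.

Definition nbhd (x : T) : {set T} := [set y | e x y].
Definition deg (x : T) : nat := #|nbhd x|.

Definition walk_len (x y : T) (n : nat) : bool :=
  [exists p : n.-tuple T, path e x p && (last x p == y)].

(* graph distance: least n such that a walk of length n from x to y exists
   (for a connected graph such an n is < #|T|, so the search range is enough) *)
Definition gdist (x y : T) : nat := find (walk_len x y) (iota 0 #|T|).

Definition ecc (v : T) : nat := \max_(w : T) gdist w v.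

Variable R : realType.

Definition trans (g : R) (x y : T) : R :=
  (if x == y then g else 0) + (if e x y then (1 - g) / (deg x)%:R else 0).

Fixpoint walk_dist (g : R) (w : T) (k : nat) : T -> R :=
  match k with
  | 0 => fun y => if y == w then 1 else 0
  | k'.+1 => fun y => \sum_(x : T) walk_dist g w k' x * trans g x y
  end.

Definition coupling (mu nu : T -> R) (pi : T -> T -> R) : Prop :=
  (forall x y, 0 <= pi x y) /\
  (forall x, \sum_(y : T) pi x y = mu x) /\
  (forall y, \sum_(x : T) pi x y = nu y).

Definition tcost (pi : T -> T -> R) : R :=
  \sum_(x : T) \sum_(y : T) pi x y * (gdist x y)%:R.

Definition wasserstein (mu nu : T -> R) : R :=
  inf [set c | exists pi, coupling mu nu pi /\ c = tcost pi]%classic.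

End Graph.

(* Since beta = 1 the second walk never leaves v, so W_k is the expected distance
   d(X_k, v) of the first walk. Hypotheses (ii)-(iv) say that the level d(X_k, v) is
   itself the lazy walk on the path 0 - 1 - ... - D (D the eccentricity of v),
   reflected at both ends and started at the midpoint D/2. That walk commutes with the
   reflection i |-> D - i, so the law of the level stays symmetric about D/2 and its
   mean stays d(u, v). *)

From mathcomp Require Import all_boot all_order all_algebra.
From mathcomp Require Import boolp classical_sets reals.
From mathcomp Require Import zify lra.
Import Order.TTheory GRing.Theory Num.Theory.
Local Open Scope ring_scope.
Set Implicit Arguments. Unset Strict Implicit.

Section Distance.
Variables (T : finType) (e : rel T).

Lemma walk_lenP x y n :
  reflect (exists p : seq T, [/\ size p = n, path e x p & last x p = y])
          (walk_len e x y n).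
Proof.
apply: (iffP existsP) => [[p /andP[ep /eqP <-]]|[p [sz ep <-]]].
  by exists (val p); rewrite size_tuple.
have sz' : size p == n by apply/eqP.
by exists (Tuple sz'); rewrite /= ep eqxx.
Qed.

Lemma gdist_min x y n : walk_len e x y n -> (gdist e x y <= n)%N.
Proof.
move=> wn; rewrite leqNgt; apply/negP => lt_dn.
have le_dT : (gdist e x y <= #|T|)%N.
  by rewrite /gdist -[X in (_ <= X)%N](size_iota 0) find_size.
have := before_find 0 lt_dn.
by rewrite nth_iota ?add0n ?wn //; apply: leq_trans lt_dn le_dT.
Qed.

Lemma gdist0 x : gdist e x x = 0%N.
Proof. by apply/eqP; rewrite -leqn0 gdist_min //; apply/walk_lenP; exists [::]. Qed.

Lemma gdist_le_ecc x v : (gdist e x v <= ecc e v)%N.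
Proof. exact: (@leq_bigmax _ (fun w => gdist e w v)). Qed.

Hypothesis conn : connected_graph e.

Lemma gdist_walk_len x y : walk_len e x y (gdist e x y).
Proof.
have [p ep lastp] := connectP (conn x y).
move: lastp; case: (shortenP ep) => q eq_q uq _ lastq.
have lt_qT : (size q < #|T|)%N.
  by have := max_card (mem (x :: q)); rewrite (card_uniqP uq).
have hasT : has (walk_len e x y) (iota 0 #|T|).
  apply/hasP; exists (size q); first by rewrite mem_iota.
  by apply/walk_lenP; exists q.
have := nth_find 0 hasT; rewrite nth_iota ?add0n //.
by rewrite -[X in (_ < X)%N](size_iota 0) -has_find.
Qed.

Lemma gdist_eq0 x y : (gdist e x y == 0%N) = (x == y).
Proof.
apply/eqP/eqP => [d0|->]; last exact: gdist0.
by move: (gdist_walk_len x y); rewrite d0 => /walk_lenP[[|? ?] [// _ <-]].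
Qed.

Lemma gdist_edge x y z : e x y -> (gdist e x z <= (gdist e y z).+1)%N.
Proof.
move=> exy; apply: gdist_min.
have /walk_lenP[p [<- ep <-]] := gdist_walk_len y z.
by apply/walk_lenP; exists (y :: p); rewrite /= exy.
Qed.

Lemma deg_gt0 x : (1 < #|T|)%N -> (0 < deg e x)%N.
Proof.
move=> /card_gt1P[y [z [_ _ neq_yz]]].
have [w neq_wx] : exists w, w != x.
  by case: (eqVneq y x) => [eq_yx|]; [exists z; rewrite -eq_yx eq_sym | exists y].
have [[|n p] ep lastp] := connectP (conn x w).
  by rewrite /= in lastp; rewrite lastp eqxx in neq_wx.
by rewrite /deg card_gt0; apply/set0Pn; exists n; rewrite inE; case/andP: ep.
Qed.

End Distance.

Section Walk.
Variables (R : realType) (T : finType) (e : rel T).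

Lemma sum_dirac (F : T -> R) v : \sum_y (if y == v then 1 else 0) * F y = F v.
Proof.
rewrite (bigD1 v) //= eqxx mul1r big1 ?addr0 // => y /negbTE ->; exact: mul0r.
Qed.

Lemma sum_trans (g : R) x (F : T -> R) :
  \sum_y trans e g x y * F y
  = g * F x + (1 - g) / (deg e x)%:R * \sum_(y in nbhd e x) F y.
Proof.
rewrite /trans; under eq_bigr do rewrite mulrDl.
rewrite big_split /= (bigD1 x) //= eqxx big1 ?addr0; last first.
  by move=> y; rewrite eq_sym => /negbTE ->; rewrite mul0r.
congr (_ + _); rewrite mulr_sumr [RHS]big_mkcond /=; apply: eq_bigr => y _.
by rewrite inE; case: ifP; rewrite ?mul0r.
Qed.

Lemma sum_nbhd_const x (F : T -> R) c :
  (forall y, e x y -> F y = c) -> \sum_(y in nbhd e x) F y = (deg e x)%:R * c.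
Proof.
move=> Fc; rewrite (eq_bigr (fun=> c)) => [|y]; last by rewrite inE => /Fc.
by rewrite sumr_const mulr_natl.
Qed.

Lemma trans_sum1 (g : R) x : (0 < deg e x)%N -> \sum_y trans e g x y = 1.
Proof.
move=> deg_gt0; have := sum_trans g x (fun _ => 1).
under eq_bigr do rewrite mulr1; move=> ->.
by rewrite sumr_const -/(deg e x) divfK ?pnatr_eq0 -?lt0n // mulr1 addrC subrK.
Qed.

Lemma trans_ge0 (g : R) x y : 0 <= g <= 1 -> 0 <= trans e g x y.
Proof.
case/andP=> g_ge0 g_le1; apply: addr_ge0; first by case: ifP.
by case: ifP => // _; rewrite divr_ge0 // subr_ge0.
Qed.

Lemma sum_walk_distS (g : R) w k (F : T -> R) :
  \sum_y walk_dist e g w k.+1 y * F y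
  = \sum_x walk_dist e g w k x * \sum_y trans e g x y * F y.
Proof.
rewrite /=; under eq_bigr do rewrite mulr_suml.
rewrite exchange_big /=; apply: eq_bigr => x _.
by rewrite mulr_sumr; apply: eq_bigr => y _; rewrite mulrA.
Qed.

Lemma walk_dist_ge0 (g : R) w k x : 0 <= g <= 1 -> 0 <= walk_dist e g w k x.
Proof.
move=> g01; elim: k x => [|k IH] x /=; first by case: ifP.
by apply: sumr_ge0 => y _; rewrite mulr_ge0 ?trans_ge0.
Qed.

Lemma walk_dist_sum1 (g : R) w k :
  (forall x, 0 < deg e x)%N -> \sum_x walk_dist e g w k x = 1.
Proof.
move=> deg_gt0; elim: k => [|k IH].
  by have := sum_dirac (fun _ => 1) w; under eq_bigr do rewrite mulr1.
under eq_bigr do rewrite -[walk_dist _ _ _ _ _]mulr1.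
rewrite sum_walk_distS -[RHS]IH; apply: eq_bigr => x _.
by under eq_bigr do rewrite mulr1; rewrite trans_sum1 ?mulr1.
Qed.

Lemma walk_dist1 v k : walk_dist e (1 : R) v k = fun y => if y == v then 1 else 0.
Proof.
elim: k => [//|k IH]; apply/funext => y /=; rewrite IH.
by rewrite sum_dirac /trans subrr mul0r if_same addr0 eq_sym.
Qed.

(* The only coupling with a point mass is the product coupling. *)
Lemma wasserstein_dirac (mu : T -> R) v :
  (forall x, 0 <= mu x) -> \sum_x mu x = 1 ->
  wasserstein e mu (fun y => if y == v then 1 else 0)
  = \sum_x mu x * (gdist e x v)%:R.
Proof.
move=> mu_ge0 mu_sum1; rewrite /wasserstein -[RHS]inf1; congr inf.
apply/seteqP; split => c /=.
- move=> [pi [[pi_ge0 [pi_row pi_col]] ->]].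
  have pi0 x y : y != v -> pi x y = 0.
    move=> neq_yv; have := pi_col y; rewrite (negbTE neq_yv).
    by move/(psumr_eq0P (fun x _ => pi_ge0 x y)); apply.
  rewrite /tcost; apply: eq_bigr => x _; rewrite -pi_row mulr_suml.
  apply: eq_bigr => y _; case: (eqVneq y v) => [-> // | /pi0 ->].
  by rewrite !mul0r.
- move=> ->; exists (fun x y => mu x * (if y == v then 1 else 0)).
  split; last first.
    rewrite /tcost; apply: eq_bigr => x _; under eq_bigr do rewrite mulrAC mulrC.
    by rewrite sum_dirac mulrC.
  split; first by move=> x y; rewrite mulr_ge0 //; case: ifP.
  split=> [x|y]; last by rewrite -mulr_suml mu_sum1 mul1r.
  by under eq_bigr do rewrite mulrC; exact: sum_dirac (fun=> mu x) v.
Qed.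

Lemma wasserstein_gdist0 (mu nu : T -> R) :
  (forall x y, gdist e x y = 0%N) -> wasserstein e mu nu = 0.
Proof.
move=> gdist0; rewrite /wasserstein; set S := [set c | _]%classic.
have S0 : (S `<=` [set 0])%classic.
  move=> c [pi [_ ->]]; rewrite /tcost big1 // => x _.
  by rewrite big1 // => y _; rewrite gdist0 mulr0.
have [-> | /set0P[c Sc]] := eqVneq S set0; first exact: inf0.
suff -> : S = [set 0]%classic by exact: inf1.
by apply/seteqP; split => // _ ->; rewrite -(S0 c Sc).
Qed.
End Walk.

Section PathWalk.
Variable R : realType.

Definition path_nbr_avg (D : nat) (phi : nat -> R) (i : nat) : R :=
  if i == 0%N then phi 1%N
  else if i == D then phi D.-1
  else (phi i.-1 + phi i.+1) / 2.

Definition path_step (a : R) (D : nat) (phi : nat -> R) (i : nat) : R :=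
  a * phi i + (1 - a) * path_nbr_avg D phi i.

Lemma path_nbr_avg_rev D phi i : (0 < D)%N -> (i <= D)%N ->
  path_nbr_avg D (fun j => phi (D - j)%N) i = path_nbr_avg D phi (D - i).
Proof.
move=> D_gt0 le_iD; rewrite /path_nbr_avg.
have [-> | i_gt0] := posnP i; first by rewrite subn0 eqxx gtn_eqF // subn1.
case: (eqVneq i D) => [-> | neq_iD]; first by rewrite subnn eqxx; congr phi; lia.
have -> : (D - i == 0)%N = false by lia.
have -> : (D - i == D)%N = false by lia.
have -> : (D - i.-1 = (D - i).+1)%N by lia.
have -> : (D - i.+1 = (D - i).-1)%N by lia.
by rewrite addrC.
Qed.

Lemma path_step_rev a D phi i : (0 < D)%N -> (i <= D)%N ->
  path_step a D (fun j => phi (D - j)%N) i = path_step a D phi (D - i).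
Proof. by move=> D_gt0 le_iD; rewrite /path_step path_nbr_avg_rev. Qed.

End PathWalk.

Section Levels.
Variables (R : realType) (T : finType) (e : rel T) (v : T).
Hypothesis graph_simple : simple_graph e.
Hypothesis graph_conn : connected_graph e.
Local Notation f x := (gdist e x v).
Local Notation D := (ecc e v).
Hypothesis ecc_gt0 : (0 < D)%N.
Hypothesis top_descends : forall x, f x = D -> forall n, e x n -> (f n < f x)%N.
Hypothesis mid_balanced : forall x, (0 < f x)%N -> (f x < D)%N ->
  (2 * #|[set n | e x n & (f n < f x)%N]| = deg e x)%N /\
  (2 * #|[set n | e x n & (f x < f n)%N]| = deg e x)%N.

Lemma card_gt1 : (1 < #|T|)%N.
Proof.
have T_gt0 : (0 < #|T|)%N by apply/card_gt0P; exists v.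
have [w ecc_w] := bigop.eq_bigmax (fun w => gdist e w v) T_gt0.
have : (0 < f w)%N by rewrite -ecc_w.
by rewrite lt0n (gdist_eq0 graph_conn) => neq_wv; apply/card_gt1P; exists w, v.
Qed.

Lemma gdist_nbr x y : e x y -> (f y <= (f x).+1)%N /\ (f x <= (f y).+1)%N.
Proof.
have [e_sym _] := graph_simple.
by move=> exy; rewrite !(gdist_edge graph_conn) // e_sym.
Qed.

Lemma nbr_level_bottom x y : f x = 0%N -> e x y -> f y = 1%N.
Proof.
move=> fx0 exy; have [le_fy1 _] := gdist_nbr exy; rewrite fx0 in le_fy1.
have eq_xv : x = v by apply/eqP; rewrite -(gdist_eq0 graph_conn) fx0.
have [_ e_irr] := graph_simple.
have : f y != 0%N.
  by rewrite (gdist_eq0 graph_conn) -eq_xv; apply: contraTneq exy => ->; rewrite e_irr.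
lia.
Qed.

Lemma nbr_level_top x y : f x = D -> e x y -> f y = D.-1.
Proof. by move=> fxD exy; have := top_descends fxD exy; have := gdist_nbr exy; lia. Qed.

Lemma sum_nbhd_level_mid x (phi : nat -> R) : (0 < f x < D)%N ->
  \sum_(y in nbhd e x) phi (f y)
  = (deg e x)%:R * ((phi (f x).-1 + phi (f x).+1) / 2).
Proof.
move=> /andP[fx_gt0 fx_ltD]; have [card_down card_up] := mid_balanced fx_gt0 fx_ltD.
set Down := [set n | _ & _] in card_down; set Up := [set n | _ & _] in card_up.
have disj : [disjoint Down & Up].
  by apply/pred0P => y; rewrite /= !inE; apply/negbTE; lia.
have nbhdE : nbhd e x = Down :|: Up.
  apply/eqP; rewrite eq_sym eqEcard cardsU (disjoint_setI0 disj) cards0.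
  apply/andP; split; last by rewrite /deg in card_down card_up; lia.
  by apply/fintype.subsetP => y; rewrite !inE => /orP[] /andP[->].
rewrite nbhdE (eq_bigl [predU Down & Up]) => [|y]; last by rewrite !inE.
rewrite bigU //= (eq_bigr (fun=> phi (f x).-1)) => [|y]; last first.
  by rewrite inE => /andP[exy lt]; congr phi; have := gdist_nbr exy; lia.
rewrite [X in _ + X](eq_bigr (fun=> phi (f x).+1)) => [|y]; last first.
  by rewrite inE => /andP[exy lt]; congr phi; have := gdist_nbr exy; lia.
have card_updown : #|Up| = #|Down|.
  by apply/eqP; rewrite -(eqn_pmul2l (_ : 0 < 2)%N) // card_up card_down.
rewrite !sumr_const card_updown -card_down -mulrnDl natrM mulrC mulrA.
by rewrite divfK ?pnatr_eq0 // mulr_natr.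
Qed.

Lemma sum_nbhd_level x (phi : nat -> R) :
  \sum_(y in nbhd e x) phi (f y) = (deg e x)%:R * path_nbr_avg D phi (f x).
Proof.
rewrite /path_nbr_avg; case: (posnP (f x)) => [fx0 | fx_gt0].
  by apply: sum_nbhd_const => y exy; rewrite (nbr_level_bottom fx0 exy).
case: (eqVneq (f x) D) => [fxD | neq_fxD].
  by apply: sum_nbhd_const => y exy; rewrite (nbr_level_top fxD exy).
by rewrite sum_nbhd_level_mid // fx_gt0 ltn_neqAle neq_fxD gdist_le_ecc.
Qed.

Lemma sum_trans_level (a : R) x (phi : nat -> R) :
  \sum_y trans e a x y * phi (f y) = path_step a D phi (f x).
Proof.
have deg_neq0 : (deg e x)%:R != 0 :> R.
  by rewrite pnatr_eq0 -lt0n (deg_gt0 graph_conn) // card_gt1.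
by rewrite sum_trans sum_nbhd_level mulrA divfK.
Qed.

Variables (a : R) (u : T).
Local Notation mu k := (walk_dist e a u k).

Lemma expect_levelS k (phi : nat -> R) :
  \sum_y mu k.+1 y * phi (f y) = \sum_x mu k x * path_step a D phi (f x).
Proof. by rewrite sum_walk_distS; apply: eq_bigr => x _; rewrite sum_trans_level. Qed.

Hypothesis u_mid : (2 * f u = D)%N.

Lemma expect_level_rev k (phi : nat -> R) :
  \sum_x mu k x * phi (f x) = \sum_x mu k x * phi (D - f x)%N.
Proof.
elim: k phi => [|k IH] phi; first by rewrite /= !sum_dirac; congr phi; lia.
rewrite expect_levelS (expect_levelS k (fun i => phi (D - i)%N)) IH.
apply: eq_bigr => x _.
by rewrite path_step_rev ?gdist_le_ecc.
Qed.

Lemma expect_gdist k : \sum_x mu k x * (f x)%:R = (f u)%:R.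
Proof.
have mass1 : \sum_x mu k x = 1.
  by apply: walk_dist_sum1 => x; rewrite (deg_gt0 graph_conn) // card_gt1.
have := expect_level_rev k (fun i => i%:R).
under [X in _ = X -> _]eq_bigr do rewrite natrB ?gdist_le_ecc // mulrBr.
rewrite sumrB -mulr_suml mass1 mul1r -u_mid natrM.
lra.
Qed.

End Levels.

Unset Implicit Arguments.

Theorem lemma7p5 (R : realType) (T : finType) (e : rel T)
  (u v : T) (alpha beta : R) :
  simple_graph e -> connected_graph e ->
  0 <= alpha -> alpha <= beta -> beta <= 1 ->
  beta = 1 ->
  (2 * gdist e u v = ecc e v)%N ->
  (forall x, gdist e x v = ecc e v ->
     forall n, e x n -> (gdist e n v < gdist e x v)%N) ->
  (forall x, (0 < gdist e x v)%N -> (gdist e x v < ecc e v)%N ->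
     (2 * #|[set n | e x n & (gdist e n v < gdist e x v)%N]| = deg e x)%N /\
     (2 * #|[set n | e x n & (gdist e x v < gdist e n v)%N]| = deg e x)%N) ->
  forall k : nat,
    wasserstein e (walk_dist e alpha u k) (walk_dist e beta v k)
    = wasserstein e (walk_dist e alpha u 0) (walk_dist e beta v 0).
Proof.
move=> graph_simple graph_conn alpha_ge0 le_ab _ beta1 u_mid top_descends
  mid_balanced k.
subst beta; have alpha01 : 0 <= alpha <= 1 by rewrite alpha_ge0.
have [ecc0 | ecc_gt0] := posnP (ecc e v).
  (* A single vertex: every transport cost vanishes, while the walk need not even
     keep unit mass there. *)
  have all_v x : x = v.
    by apply/eqP; rewrite -(gdist_eq0 graph_conn) -leqn0 -ecc0 gdist_le_ecc.
  have gdist_0 x y : gdist e x y = 0%N by rewrite (all_v x) (all_v y) gdist0.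
  by rewrite !(wasserstein_gdist0 _ _ gdist_0).
have deg_pos x : (0 < deg e x)%N.
  by rewrite (deg_gt0 graph_conn) // (card_gt1 graph_conn ecc_gt0).
have mu_ge0 j x : 0 <= walk_dist e alpha u j x by exact: walk_dist_ge0.
have mu_sum1 j : \sum_x walk_dist e alpha u j x = 1 by exact: walk_dist_sum1.
rewrite !walk_dist1 !wasserstein_dirac //.
by rewrite !(expect_gdist graph_simple graph_conn ecc_gt0 top_descends mid_balanced
  alpha u_mid).
Qed.
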